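(* In the SIS model under multi-layer Markovian mobility described in the context, with every generator matrix $Q^\alpha$ irreducible (every mobility digraph strongly connected), consider a solution with $\boldsymbol x(0)\gg\boldsymbol 0$ and $\boldsymbol p(0)\in[0,1]^{nm}$. If $p^\alpha_i(t)\to 0$ as $t\to\infty$ for some $i\in\{1,\dots,n\}$ and some $\alpha\in\{1,\dots,m\}$, then $\boldsymbol p(t)\to\boldsymbol 0$ as $t\to\infty$.
   Context: Setting: $n$ patches and $m$ classes. For each class $\alpha$, $Q^\alpha=(q^\alpha_{ij})$ is a continuous-time Markov chain generator on $\{1,\dots,n\}$ ($q^\alpha_{ij}\ge0$ for $i\ne j$ is the rate from $i$ to $j$, $q^\alpha_{ii}=-\sum_{j\ne i}q^\alpha_{ij}$). $x^\alpha_i>0$ is the number of class-$\alpha$ individuals at node $i$, $p^\alpha_i$ the infected fraction of class $\alpha$ at node $i$; $\boldsymbol x,\boldsymbol p\in\mathbb R^{nm}$ stack these class by class, and $P=\operatorname{diag}(\boldsymbol p)$. Node $i$ has infection rate $\beta_i>0$ and recovery rate $\delta_i\ge0$; $B$ and $D$ are $nm\times nm$ block-diagonal with $m$ identical blocks $\operatorname{diag}(\beta_1,\dots,\beta_n)$ and $\operatorname{diag}(\delta_1,\dots,\delta_n)$. $L(\boldsymbol x)$ is block-diagonal with blocks $L^\alpha(\boldsymbol x)$: $l^\alpha_{ii}=\sum_{j\ne i}q^\alpha_{ji}x^\alpha_j/x^\alpha_i$, $l^\alpha_{ij}=-q^\alpha_{ji}x^\alpha_j/x^\alpha_i$ ($i\ne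 j$). With $f^\alpha_i(\boldsymbol x)=x^\alpha_i/\sum_\gamma x^\gamma_i$, $F^\alpha=\operatorname{diag}(f^\alpha_1,\dots,f^\alpha_n)$, $\bar F=[F^1,\dots,F^m]$, $F(\boldsymbol x)$ is $m$ copies of $\bar F(\boldsymbol x)$ stacked vertically. Dynamics: $\dot{\boldsymbol p}=(BF(\boldsymbol x)-D-L(\boldsymbol x))\boldsymbol p-PBF(\boldsymbol x)\boldsymbol p$, $\dot{\boldsymbol x}^\alpha=(Q^\alpha)^\top\boldsymbol x^\alpha$. Componentwise, $\dot p^\alpha_i=-\delta_ip^\alpha_i+\beta_i\bar p_i(1-p^\alpha_i)-l^\alpha_{ii}p^\alpha_i-\sum_{j\ne i}l^\alpha_{ij}p^\alpha_j$ with $\bar p_i=\sum_\alpha f^\alpha_ip^\alpha_i$. *)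

From mathcomp Require Import all_boot all_order all_algebra.
From mathcomp Require Import all_classical all_reals all_analysis.
Set Implicit Arguments. Unset Strict Implicit. Unset Printing Implicit Defensive.
Import Order.TTheory GRing.Theory Num.Theory.
Import numFieldNormedType.Exports.
Local Open Scope classical_set_scope.
Local Open Scope ring_scope.

Definition generator (R : realType) (n : nat) (Q : 'M[R]_n) : Prop :=
  (forall i j : 'I_n, i != j -> 0 <= Q i j) /\
  (forall i : 'I_n, Q i i = - \sum_(j < n | j != i) Q i j).

Definition irreducible_gen (R : realType) (n : nat) (Q : 'M[R]_n) : Prop :=
  forall i j : 'I_n, connect (fun a b : 'I_n => (a != b) && (0 < Q a b)) i j.

(* States: x t a i = x^a_i(t), p t a i = p^a_i(t), classes a : 'I_m, nodes i : 'I_n. *)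

Definition frac (R : realType) (m n : nat) (x : 'I_m -> 'I_n -> R)
  (a : 'I_m) (i : 'I_n) : R := x a i / \sum_(g < m) x g i.

Definition pbar (R : realType) (m n : nat) (x p : 'I_m -> 'I_n -> R)
  (i : 'I_n) : R := \sum_(a < m) frac x a i * p a i.

Definition Lmat (R : realType) (m n : nat) (Q : 'I_m -> 'M[R]_n)
  (x : 'I_m -> 'I_n -> R) (a : 'I_m) (i j : 'I_n) : R :=
  if i == j then \sum_(k < n | k != i) Q a k i * x a k / x a i
  else - (Q a j i * x a j / x a i).

Definition p_rhs (R : realType) (m n : nat) (Q : 'I_m -> 'M[R]_n)
  (beta delta : 'I_n -> R) (x p : 'I_m -> 'I_n -> R) (a : 'I_m) (i : 'I_n) : R :=
  - delta i * p a i + beta i * pbar x p i * (1 - p a i)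
  - Lmat Q x a i i * p a i
  - \sum_(j < n | j != i) Lmat Q x a i j * p a j.

Definition x_rhs (R : realType) (m n : nat) (Q : 'I_m -> 'M[R]_n)
  (x : 'I_m -> 'I_n -> R) (a : 'I_m) (i : 'I_n) : R :=
  \sum_(j < n) Q a j i * x a j.

Definition is_solution (R : realType) (m n : nat) (Q : 'I_m -> 'M[R]_n)
  (beta delta : 'I_n -> R) (x p : R -> 'I_m -> 'I_n -> R) : Prop :=
  (forall a i, x s a i @[s --> 0^'+] --> x 0 a i) /\
  (forall a i, p s a i @[s --> 0^'+] --> p 0 a i) /\
  (forall (t : R) a i, 0 < t ->
     is_derive t 1 (fun s => x s a i) (x_rhs Q (x t) a i)) /\
  (forall (t : R) a i, 0 < t ->
     is_derive t 1 (fun s => p s a i) (p_rhs Q beta delta (x t) (p t) a i)).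

From Pilot Require Import Defs.
From mathcomp Require Import all_boot all_order all_algebra.
From mathcomp Require Import all_classical all_reals all_analysis.
From mathcomp Require Import ring lra.
Set Implicit Arguments. Unset Strict Implicit. Unset Printing Implicit Defensive.
Import Order.TTheory GRing.Theory Num.Theory.
Import numFieldNormedType.Exports.
Local Open Scope classical_set_scope.
Local Open Scope ring_scope.

(* The mobility part is linear and decoupled from the epidemic.  By
   quasi-monotonicity x stays positive and p stays in [0, 1]; each class of x
   conserves its mass, and by irreducibility (walking along a simple
   path of at most n edges, one time unit per edge) x is eventually bounded
   between two positive constants.  Then every equation for p has bounded
   coefficients: p_i' >= -K p_i + C p_j whenever j feeds i (an edge j -> i of
   the mobility graph of the class, or any class j at the same node while
   p_i <= 1/2).  For such a pair, the variation of constants over one time unit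
   gives p_j(t) <= const * p_i(t + 1), so p_i -> 0 forces p_j -> 0.  Starting
   from the given component, first all classes at that node, then all nodes
   along the strongly connected mobility graphs, tend to 0. *)

Section DifferentialInequalities.
Variable R : realType.
Implicit Types (y u v : R -> R) (s t : R).

Definition is_derive_pos y y' :=
  y s @[s --> 0^'+] --> y 0 /\ forall t, 0 < t -> is_derive t 1 y (y' t).

Lemma is_derive_continuous (f : R -> R) t df : is_derive t 1 f df ->
  {for t, continuous f}.
Proof. by move=> [df1 _]; apply: differentiable_continuous; apply/derivable1_diffP. Qed.

Lemma is_derive_pos_cont y y' t : is_derive_pos y y' -> 0 < t ->
  {for t, continuous y}.
Proof. by move=> [_ dy] /dy; exact: is_derive_continuous. Qed.

Lemma is_derive_pos_cvg_right y y' t : is_derive_pos y y' -> 0 <= t ->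
  y s @[s --> t^'+] --> y t.
Proof.
move=> yy'; rewrite le_eqVlt => /predU1P[<-|t0]; first exact: yy'.1.
exact/cvg_at_right_filter/(is_derive_pos_cont yy' t0).
Qed.

Lemma is_derive_pos_cvg_left y y' t : is_derive_pos y y' -> 0 < t ->
  y s @[s --> t^'-] --> y t.
Proof. by move=> yy' t0; exact/cvg_at_left_filter/(is_derive_pos_cont yy' t0). Qed.

Lemma is_derive_pos_within y y' a b : is_derive_pos y y' -> 0 <= a -> a < b ->
  {within `[a, b], continuous y}.
Proof.
move=> yy' a0 ab; apply/continuous_within_itvP => //; split.
- move=> s; rewrite in_itv /= => /andP[aS _].
  exact: (is_derive_pos_cont yy' (le_lt_trans a0 aS)).
- exact: (is_derive_pos_cvg_right yy' a0).
- exact: (is_derive_pos_cvg_left yy' (le_lt_trans a0 ab)).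
Qed.

Lemma is_derive_expRM d t :
  is_derive t 1 (fun s => expR (d * s)) (expR (d * t) * d).
Proof.
have dM : is_derive t 1 (fun s : R => d * s) d.
  by have := is_deriveZ d (is_derive_id t (1 : R)); rewrite /= scaler1.
exact: (is_derive1_comp (is_derive_expR (d * t)) dM).
Qed.

Lemma is_derive_posD_expR y y' e d : is_derive_pos y y' ->
  is_derive_pos (fun s => y s + e * expR (d * s))
                (fun s => y' s + e * (expR (d * s) * d)).
Proof.
move=> [y0 dy]; split; last first.
  by move=> t t0; exact: (is_deriveD (dy t t0) (is_deriveZ e (is_derive_expRM d t))).
apply: cvgD => //; apply: cvg_at_right_filter.
exact: is_derive_continuous (is_deriveZ e (is_derive_expRM d 0)).
Qed.

Lemma is_derive_pos_sum k (y y' : 'I_k -> R -> R) :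
  (forall i, is_derive_pos (y i) (y' i)) ->
  is_derive_pos (fun s => \sum_(i < k) y i s) (fun s => \sum_(i < k) y' i s).
Proof.
move=> yy'; split.
  by apply: cvg_big => [|i _]; [exact: add_continuous|exact: (yy' i).1].
move=> t t0; rewrite [X in is_derive _ _ X](_ : _ = \sum_(i < k) y i).
  exact: is_derive_sum (fun i => (yy' i).2 t t0).
by apply/funext => s; rewrite fct_sumE.
Qed.

Lemma is_derive_pos_cstB y y' c : is_derive_pos y y' ->
  is_derive_pos (fun s => c - y s) (fun s => - y' s).
Proof.
move=> [y0 dy]; split; first by apply: cvgB => //; exact: cvg_cst.
move=> t t0; rewrite [X in is_derive _ _ X](_ : _ = cst c - y) //.
by have := is_deriveB (is_derive_cst c t 1) (dy t t0); rewrite sub0r.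
Qed.

Lemma is_derive_le0_left_min (f : R -> R) (c e df : R) : 0 < e ->
  is_derive c 1 f df -> (forall s, c - e < s < c -> f c <= f s) -> df <= 0.
Proof.
move=> e0 [fd <-] fmin.
rewrite ['D_1 f c]cvg_at_leftE; last exact: fd.
apply: limr_le.
  rewrite -(cvg_at_leftE (fun h => h^-1 *: ((f \o shift c) _ - f c))) //.
  apply: cvg_trans fd; apply: cvg_app.
  move=> A [r r0 Ar]; exists r => // h hr hgt0; apply: Ar => //.
  exact/ltr0_neq0.
near=> h; apply: mulr_le0_ge0.
  by rewrite invr_le0; apply: ltW; near: h; exists 1 => /=.
rewrite subr_ge0 [_%:A]mulr1 /=; apply: fmin.
have h0 : h < 0 by near: h; exists 1 => //=.
have he : - e < h.
  near: h; exists e => //= s; rewrite /ball_ /= sub0r normrN.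
  by move=> /ltr_normlP[] *; lra.
by apply/andP; split; lra.
Unshelve. all: by end_near. Qed.

Lemma affine_comparison y y' s h d A : is_derive_pos y y' ->
  0 <= s -> 0 < h -> 0 < d ->
  (forall t, s < t < s + h -> - d * y t + A <= y' t) ->
  expR (- d * h) * (y s - A / d) <= y (s + h) - A / d.
Proof.
move=> yy' s0 h0 d0 y'_ge.
(* [t |-> exp(d t) (y t - A / d)] has a nonnegative derivative on the window *)
pose g t := expR (d * t) * (y t - A / d).
pose g' t := expR (d * t) * (y' t + d * y t - A).
have sh : s < s + h by rewrite ltrDl.
have dg t : t \in `]s, s + h[ -> is_derive t 1 g (g' t).
  rewrite in_itv /= => /andP[st _].
  have dy := yy'.2 t (le_lt_trans s0 st).
  have := is_deriveM (is_derive_expRM d t) (is_deriveB dy (is_derive_cst (A / d) t 1)).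
  rewrite [X in is_derive _ _ X _ -> _](_ : _ = g) //; move/is_derive_eq; apply.
  by rewrite /g' subr0 /= /GRing.scale /= !fctE; field; rewrite gt_eqF.
have cg : {within `[s, s + h], continuous g}.
  move=> t; apply: (@continuousM _ (subspace `[s, s + h]) (fun s => expR (d * s))).
    by apply: continuous_subspaceT => z; exact: is_derive_continuous (is_derive_expRM d z).
  by apply: continuousB; [exact: (is_derive_pos_within yy' s0 sh)|exact: cst_continuous].
have [c cI gE] := MVT sh dg cg.
have g'c : 0 <= g' c.
  move: cI; rewrite in_itv /= => cI.
  by rewrite mulr_ge0 ?expR_ge0 //; have := y'_ge c cI; lra.
have gsh : g s <= g (s + h).
  by rewrite -subr_ge0 gE mulr_ge0 // addrAC subrr add0r ltW.
rewrite -(ler_pM2l (expR_gt0 (d * (s + h)))) mulrA -expRD.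
by have -> : d * (s + h) + - d * h = d * s by ring.
Qed.

Lemma exp_decay_lower y y' s w K : is_derive_pos y y' -> 0 <= s -> 0 <= w ->
  0 < K -> (forall t, s < t < s + w -> - K * y t <= y' t) ->
  expR (- K * w) * y s <= y (s + w).
Proof.
move=> yy' s0; rewrite le_eqVlt => /predU1P[<-|w0] K0 y'_ge.
  by rewrite mulr0 expR0 mul1r addr0.
have := affine_comparison (A := 0) yy' s0 w0 K0.
by rewrite !mul0r !subr0; apply=> t /y'_ge; rewrite addr0.
Qed.

Lemma transfer_lower u u' v v' s K K' C :
  is_derive_pos u u' -> is_derive_pos v v' -> 0 <= s ->
  0 < K -> 0 < K' -> 0 <= C -> 0 <= u s -> 0 <= v s ->
  (forall t, s < t < s + 1 -> - K' * v t <= v' t) ->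
  (forall t, s < t < s + 1 -> - K * u t + C * v t <= u' t) ->
  C * expR (- K') * (1 - expR (- K)) / K * v s <= u (s + 1).
Proof.
move=> uu' vv' s0 K0 K'0 C0 us0 vs0 v'_ge u'_ge.
have v_ge t : s < t < s + 1 -> expR (- K') * v s <= v t.
  move=> /andP[st ts1].
  have dec : expR (- K' * (t - s)) * v s <= v t.
    have := @exp_decay_lower v v' s (t - s) K' vv' s0.
    rewrite (_ : s + (t - s) = t); last by ring.
    by apply; [lra|exact: K'0|move=> r /andP[sr rt]; apply: v'_ge; lra].
  by apply: le_trans dec; rewrite ler_wpM2r // ler_expR; nra.
have u'_ge' t : s < t < s + 1 -> - K * u t + C * expR (- K') * v s <= u' t.
  move=> tI; apply: le_trans (u'_ge t tI).
  by rewrite lerD2l -mulrA ler_wpM2l // v_ge.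
have := affine_comparison uu' s0 ltr01 K0 u'_ge'; rewrite mulr1.
have : 0 <= expR (- K) * u s by rewrite mulr_ge0 ?expR_ge0.
have -> : C * expR (- K') * (1 - expR (- K)) / K * v s
  = C * expR (- K') * v s / K - expR (- K) * (C * expR (- K') * v s / K).
  by field; rewrite gt_eqF.
rewrite mulrBr; lra.
Qed.

Lemma cvg0_driven u u' v v' T K K' C :
  is_derive_pos u u' -> is_derive_pos v v' -> 0 <= T ->
  0 < K -> 0 < K' -> 0 < C ->
  (forall t, T <= t -> 0 <= u t) -> (forall t, T <= t -> 0 <= v t) ->
  (forall t, T < t -> - K' * v t <= v' t) ->
  (forall t, T < t -> - K * u t + C * v t <= u' t) ->
  u t @[t --> +oo] --> 0 -> v t @[t --> +oo] --> 0.
Proof.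
move=> uu' vv' T0 K0 K'0 C0 u_ge0 v_ge0 v'_ge u'_ge u0.
set k := C * expR (- K') * (1 - expR (- K)) / K.
have k0 : 0 < k.
  by rewrite divr_gt0 // !mulr_gt0 ?expR_gt0 // subr_gt0 expR_lt1 oppr_lt0.
have v_le t : T <= t -> v t <= k^-1 * u (t + 1).
  move=> Tt; rewrite -(ler_pM2l k0) mulrA divff ?gt_eqF // mul1r.
  apply: transfer_lower uu' vv' (le_trans T0 Tt) K0 K'0 (ltW C0) _ _ _ _.
  - exact: u_ge0.
  - exact: v_ge0.
  - by move=> r /andP[tr _]; apply: v'_ge; apply: le_lt_trans tr.
  - by move=> r /andP[tr _]; apply: u'_ge; apply: le_lt_trans tr.
have v_squeeze : \forall t \near +oo, cst 0 t <= v t <= k^-1 * u (t + 1).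
  near=> t; have Tt : T <= t by near: t; exact: nbhs_pinfty_ge (num_real T).
  by rewrite /= v_ge0 // v_le.
apply: (squeeze_cvgr v_squeeze); first exact: cvg_cst.
rewrite -(mulr0 k^-1); apply: (@cvgM _ _ _ _ (cst k^-1) (fun t => u (t + 1))).
  exact: cvg_cst.
by rewrite cvg_shiftr.
Unshelve. all: by end_near. Qed.

Lemma near_right_gt0 (I : finType) (h h' : I -> R -> R) t :
  (forall j, is_derive_pos (h j) (h' j)) -> 0 <= t -> (forall j, 0 < h j t) ->
  exists2 e, 0 < e & forall s j, t <= s < t + e -> 0 < h j s.
Proof.
move=> hh' t0 h_gt0.
have : \forall s \near t^'+, forall j, 0 < h j s.
  apply: filter_forall => j.
  exact: cvgr_gt _ (is_derive_pos_cvg_right (hh' j) t0) _ (h_gt0 j).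
move=> [e /= e0 He]; exists e => // s j /andP[]; rewrite le_eqVlt.
move=> /predU1P[<- //|ts] tse; apply: (He s) => //=.
by rewrite ltr0_norm ?subr_lt0 //; lra.
Qed.

Lemma lt0_before y y' t : is_derive_pos y y' -> 0 < t -> y t < 0 ->
  exists2 s, 0 <= s < t & y s < 0.
Proof.
move=> yy' t0 yt; have [e /= e0 He] := cvgr_lt _ (is_derive_pos_cvg_left yy' t0) _ yt.
have [m_gt0 m_le_e m_le_t] : [/\ 0 < Num.min e t, Num.min e t <= e & Num.min e t <= t].
  by rewrite lt_min e0 t0 !ge_min !lexx orbT.
exists (t - Num.min e t / 2); first by apply/andP; split; lra.
apply: He; last lra.
rewrite /= (_ : t - (t - Num.min e t / 2) = Num.min e t / 2); last by ring.
by rewrite gtr0_norm; lra.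
Qed.

Lemma first_exit (I : finType) (h h' : I -> R -> R) t :
  (forall j, is_derive_pos (h j) (h' j)) -> (forall j, 0 < h j 0) -> 0 <= t ->
  (exists j, h j t <= 0) ->
  exists t1 k, [/\ 0 < t1 <= t, h k t1 = 0, forall j, 0 <= h j t1
                & forall s j, 0 <= s < t1 -> 0 < h j s].
Proof.
move=> hh' h0 t0 [j0 hj0].
pose Z := [set s | 0 <= s <= t /\ exists j, h j s <= 0].
have Zt : Z t by split; [rewrite t0 lexx|exists j0].
have Zlb : has_lbound Z by exists 0 => s [/andP[]].
have Zinf : has_inf Z by split; [exists t|].
set t1 := inf Z.
have t1_ge0 : 0 <= t1 by apply: lb_le_inf; [exists t|move=> s [/andP[]]].
have t1_le : t1 <= t by apply: ge_inf.
have below s j : 0 <= s < t1 -> 0 < h j s.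
  move=> /andP[s0 st1]; rewrite ltNge; apply/negP => hs.
  have Zs : Z s by split; [rewrite s0 (ltW (lt_le_trans st1 t1_le))|exists j].
  by have := ge_inf Zlb Zs; rewrite leNgt st1.
have [k hk] : exists k, h k t1 <= 0.
  apply/not_existsP => h_pos; have {}h_pos j : 0 < h j t1 by rewrite ltNge; exact/negP/h_pos.
  have [e e0 He] := near_right_gt0 hh' t1_ge0 h_pos.
  have [z Zz zlt] := inf_adherent e0 Zinf.
  have t1z := ge_inf Zlb Zz; case: Zz => _ [j hj].
  by have := He z j; rewrite -/t1 t1z zlt => /(_ isT); lra.
have t1_gt0 : 0 < t1.
  by rewrite lt_neqAle t1_ge0 andbT; apply: contraTneq hk => <-; rewrite -ltNge.
have h_ge0 j : 0 <= h j t1.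
  rewrite leNgt; apply/negP => /(lt0_before (hh' j) t1_gt0) [s sI hs].
  by have := below s j sI; lra.
exists t1, k; split => //; first by rewrite t1_gt0.
by apply/eqP; rewrite eq_le hk h_ge0.
Qed.

Lemma nonneg_invariant (I : finType) (y y' : R -> I -> R) K del :
  0 <= K -> 0 < del -> (forall k, is_derive_pos (y^~ k) (y'^~ k)) ->
  (forall k, 0 <= y 0 k) ->
  (forall t k, 0 < t -> (forall j, y t k <= y t j) -> - del < y t k < 0 ->
     K * y t k <= y' t k) ->
  forall t k, 0 <= t -> 0 <= y t k.
Proof.
move=> K0 del0 yy' y0 y'_ge t k t0; rewrite leNgt; apply/negP => ytk.
(* perturb by [e exp((K + 1) s)] and look at the first time some component vanishes *)
pose a := K + 1; pose E := expR (a * t).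
have a0 : 0 < a by rewrite /a; lra.
have E0 : 0 < E := expR_gt0 _.
pose mu := Num.min del (- y t k).
have mu0 : 0 < mu by rewrite lt_min del0 oppr_gt0.
pose e := mu / (2 * E).
have e0 : 0 < e by rewrite divr_gt0 ?mulr_gt0.
have eE : e * E = mu / 2 by rewrite /e; field; rewrite gt_eqF.
have [eE_del eE_y] : e * E < del /\ e * E < - y t k.
  by apply/andP; rewrite -lt_min -/mu eE; lra.
pose h j s := y s j + e * expR (a * s).
have hh' j := is_derive_posD_expR e a (yy' j).
have h0 j : 0 < h j 0 by rewrite /h mulr0 expR0 mulr1; have := y0 j; lra.
have ht : exists j, h j t <= 0 by exists k; rewrite /h -/E; lra.
have [t1 [k1 [/andP[t1_gt0 t1_le] hk1 h_ge0 h_gt0]]] := first_exit hh' h0 t0 ht.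
pose E1 := expR (a * t1).
have E10 : 0 < E1 := expR_gt0 _.
have E1E : E1 <= E by rewrite ler_expR ler_wpM2l // ltW.
have y_min j : y t1 k1 <= y t1 j by have := h_ge0 j; move: hk1; rewrite /h -/E1; lra.
have y_lo : - del < y t1 k1 < 0.
  by move: hk1; rewrite /h -/E1 => hk1; apply/andP; split; nra.
have := y'_ge t1 k1 t1_gt0 y_min y_lo.
have : y' t1 k1 + e * (E1 * a) <= 0.
  apply: is_derive_le0_left_min t1_gt0 ((hh' k1).2 t1 t1_gt0) _ => s /andP[s1 s2].
  by rewrite hk1; apply/ltW/h_gt0; apply/andP; split; lra.
move: hk1; rewrite /h -/E1 /a; nra.
Qed.

End DifferentialInequalities.

Lemma exists_ge_mean (R : realFieldType) (I : finType) (F : I -> R) (i0 : I) :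
  exists j, (\sum_i F i) / #|I|%:R <= F j.
Proof.
have [j _ Fj_max] := @arg_maxP _ _ I i0 xpredT F isT.
exists j; rewrite ler_pdivrMr ?ltr0n; last by apply/card_gt0P; exists i0.
by rewrite mulr_natr -sumr_const; apply: ler_sum => i _; exact: Fj_max.
Qed.

Section Mixing.
Variables (R : realType) (m n : nat) (y q : 'I_m -> 'I_n -> R) (i : 'I_n).
Hypothesis y_gt0 : forall g, 0 < y g i.

Lemma frac_ge0 g : 0 <= Defs.frac y g i.
Proof. by rewrite divr_ge0 ?sumr_ge0 // => [|h _]; exact: ltW. Qed.

Lemma frac_sum1 (a : 'I_m) : \sum_(g < m) Defs.frac y g i = 1.
Proof.
rewrite -mulr_suml divff // gt_eqF // (bigD1 a) //= ltr_pwDl //.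
by rewrite sumr_ge0 // => g _; exact: ltW.
Qed.

Lemma pbar_ge (a : 'I_m) v : (forall g, v <= q g i) -> v <= pbar y q i.
Proof.
move=> v_le; rewrite -[v]mul1r -(frac_sum1 a) mulr_suml.
by apply: ler_sum => g _; rewrite ler_wpM2l ?frac_ge0.
Qed.

End Mixing.

Lemma p_rhs_flux (R : realType) (m n : nat) (Q : 'I_m -> 'M[R]_n)
    (beta delta : 'I_n -> R) (y q : 'I_m -> 'I_n -> R) a i :
  p_rhs Q beta delta y q a i =
  - delta i * q a i + beta i * pbar y q i * (1 - q a i)
  + \sum_(j < n | j != i) Q a j i * y a j / y a i * (q a j - q a i).
Proof.
have off : \sum_(j < n | j != i) Lmat Q y a i j * q a j =
    - \sum_(j < n | j != i) Q a j i * y a j / y a i * q a j.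
  by rewrite -sumrN; apply: eq_bigr => j ji; rewrite /Lmat eq_sym (negbTE ji) mulNr.
rewrite /p_rhs off /Lmat eqxx.
under [X in _ = _ + X]eq_bigr do rewrite mulrBr.
by rewrite sumrB -[\sum_(j < n | j != i) _ * q a i]mulr_suml; ring.
Qed.

Section Model.
Variables (R : realType) (m n : nat) (Q : 'I_m -> 'M[R]_n).
Variables (beta delta : 'I_n -> R) (x p : R -> 'I_m -> 'I_n -> R).
Hypothesis Q_gen : forall a, generator (Q a).
Hypothesis Q_irr : forall a, irreducible_gen (Q a).
Hypothesis beta_gt0 : forall i, 0 < beta i.
Hypothesis delta_ge0 : forall i, 0 <= delta i.
Hypothesis sol : is_solution Q beta delta x p.
Hypothesis x0_gt0 : forall a i, 0 < x 0 a i.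
Hypothesis p0_01 : forall a i, 0 <= p 0 a i <= 1.

Lemma x_is_derive_pos a i :
  is_derive_pos (fun s => x s a i) (fun s => x_rhs Q (x s) a i).
Proof. by case: sol => x0 [_ [dx _]]; split => // t /dx. Qed.

Lemma p_is_derive_pos a i :
  is_derive_pos (fun s => p s a i) (fun s => p_rhs Q beta delta (x s) (p s) a i).
Proof. by case: sol => _ [p0 [_ dp]]; split => // t /dp. Qed.

Lemma Q_offdiag_ge0 a i j : i != j -> 0 <= Q a i j.
Proof. by case: (Q_gen a) => + _; apply. Qed.

Lemma Q_row_sum a i : \sum_(j < n) Q a i j = 0.
Proof.
case: (Q_gen a) => _ Qii; rewrite (bigD1 i) //= Qii addrC.
by apply/eqP; rewrite subr_eq0; apply/eqP/eq_bigl => j.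
Qed.

Definition diag_bound := 1 + \big[Num.max/0]_(k : 'I_m * 'I_n) - Q k.1 k.2 k.2.

Lemma diag_bound_gt0 : 0 < diag_bound.
Proof. by rewrite /diag_bound ltr_pwDl ?bigmax_ge_id. Qed.

Lemma Q_diag_ge a k : - diag_bound <= Q a k k.
Proof.
rewrite lerNl /diag_bound.
apply: le_trans (le_bigmax 0 (fun k : 'I_m * 'I_n => - Q k.1 k.2 k.2) (a, k)) _.
by rewrite lerDr.
Qed.

Lemma x_rhs_ge_diag t a k : (forall j, 0 <= x t a j) ->
  Q a k k * x t a k <= x_rhs Q (x t) a k.
Proof.
move=> x_ge0; rewrite /x_rhs (bigD1 k) //= lerDl.
by apply: sumr_ge0 => j jk; rewrite mulr_ge0 ?Q_offdiag_ge0.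
Qed.

Lemma x_rhs_ge_edge t a j k : (forall l, 0 <= x t a l) -> j != k ->
  Q a k k * x t a k + Q a j k * x t a j <= x_rhs Q (x t) a k.
Proof.
move=> x_ge0 jk; rewrite /x_rhs (bigD1 k) //= (bigD1 j) //= addrA lerDl.
by apply: sumr_ge0 => l /andP[lk _]; rewrite mulr_ge0 ?Q_offdiag_ge0.
Qed.

Lemma x_ge0 t a i : 0 <= t -> 0 <= x t a i.
Proof.
pose B := \big[Num.max/0]_(k : 'I_m * 'I_n) `|\sum_(j < n) Q k.1 j k.2|.
have B0 : 0 <= B by apply: bigmax_ge_id.
move=> t0; apply: (@nonneg_invariant R _ (fun s k => x s k.1 k.2)
  (fun s k => x_rhs Q (x s) k.1 k.2) B 1 B0 ltr01 _ _ _ t (a, i) t0).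
- by move=> k; exact: x_is_derive_pos.
- by move=> k; exact/ltW.
move=> s [b j] _ /= x_min /andP[_ xj_lt0].
have col_le : x s b j * \sum_(l < n) Q b l j <= x_rhs Q (x s) b j.
  rewrite mulr_sumr /x_rhs; apply: ler_sum => l _; rewrite mulrC.
  have [->|lj] := eqVneq l j; first by [].
  by rewrite ler_wpM2l ?Q_offdiag_ge0 //; exact: (x_min (b, l)).
have col_B : \sum_(l < n) Q b l j <= B.
  apply: le_trans (ler_norm _) _.
  exact: (le_bigmax 0 (fun k : 'I_m * 'I_n => `|\sum_(l < n) Q k.1 l k.2|) (b, j)).
by apply: le_trans col_le; rewrite mulrC ler_wnM2l // ltW.
Qed.

Lemma x_rhs_ge_decay t a k : 0 <= t -> - diag_bound * x t a k <= x_rhs Q (x t) a k.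
Proof.
move=> t0; apply: le_trans (x_rhs_ge_diag _ _) => [|j]; last exact: x_ge0.
by rewrite ler_wpM2r ?x_ge0 ?Q_diag_ge.
Qed.

Lemma x_gt0 t a i : 0 <= t -> 0 < x t a i.
Proof.
move=> t0; have := exp_decay_lower (x_is_derive_pos a i) (lexx 0) t0 diag_bound_gt0.
rewrite add0r => dec; apply: lt_le_trans (dec _); first by rewrite mulr_gt0 ?expR_gt0.
by move=> s /andP[s0 _]; apply: x_rhs_ge_decay; exact: ltW.
Qed.

Lemma x_rhs_sum a y : \sum_(i < n) x_rhs Q y a i = 0.
Proof. by rewrite /x_rhs exchange_big big1 // => j _; rewrite -mulr_suml Q_row_sum mul0r. Qed.

Lemma x_mass_const a t : 0 <= t -> \sum_(i < n) x t a i = \sum_(i < n) x 0 a i.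
Proof.
rewrite le_eqVlt => /predU1P[<- //|t0].
have mass' := is_derive_pos_sum (x_is_derive_pos a).
have dmass s : s \in `]0, t[ ->
    is_derive s 1 (fun s => \sum_(i < n) x s a i) (\sum_(i < n) x_rhs Q (x s) a i).
  by rewrite in_itv /= => /andP[s0 _]; exact: mass'.2.
have [c _ E] := MVT t0 dmass (is_derive_pos_within mass' (lexx 0) t0).
by apply/eqP; rewrite -subr_eq0 E x_rhs_sum mul0r.
Qed.

Definition min_rate :=
  \big[Num.min/1]_(k : 'I_m * 'I_n * 'I_n | 0 < Q k.1.1 k.1.2 k.2) Q k.1.1 k.1.2 k.2.

Lemma min_rate_gt0 : 0 < min_rate.
Proof. exact: lt_bigmin. Qed.

Lemma min_rate_le a j k : 0 < Q a j k -> min_rate <= Q a j k.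
Proof.
move=> Qjk; rewrite /min_rate.
exact: (@bigmin_le_cond _ _ _ 1 (a, j, k) (fun k => 0 < Q k.1.1 k.1.2 k.2)
  (fun k => Q k.1.1 k.1.2 k.2) Qjk).
Qed.

Local Notation d := diag_bound.
Local Notation edge a := (fun u v : 'I_n => (u != v) && (0 < Q a u v)).

Definition step_const :=
  Num.min (min_rate * expR (- d) * (1 - expR (- d)) / d) (expR (- d)).

Lemma step_const_gt0 : 0 < step_const.
Proof.
rewrite lt_min expR_gt0 andbT divr_gt0 ?diag_bound_gt0 // !mulr_gt0 ?min_rate_gt0 //.
  exact: expR_gt0.
by rewrite subr_gt0 expR_lt1 oppr_lt0 diag_bound_gt0.
Qed.

Lemma x_decay_step s a k : 0 <= s -> step_const * x s a k <= x (s + 1) a k.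
Proof.
move=> s0; have := exp_decay_lower (x_is_derive_pos a k) s0 ler01 diag_bound_gt0.
rewrite mulr1 => dec; apply: le_trans (dec _); last first.
  by move=> t /andP[st _]; apply: x_rhs_ge_decay; rewrite ltW // (le_lt_trans s0).
by rewrite ler_wpM2r ?ge_min ?lexx ?orbT // ltW // x_gt0.
Qed.

Lemma x_edge_step s a j k : 0 <= s -> j != k -> 0 < Q a j k ->
  step_const * x s a j <= x (s + 1) a k.
Proof.
move=> s0 jk Qjk.
have t0 t : s < t -> 0 <= t by move=> st; rewrite ltW // (le_lt_trans s0).
have tr : Q a j k * expR (- d) * (1 - expR (- d)) / d * x s a j <= x (s + 1) a k.
  apply: (transfer_lower (x_is_derive_pos a k) (x_is_derive_pos a j) s0
    diag_bound_gt0 diag_bound_gt0 (ltW Qjk)).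
  - exact/ltW/x_gt0.
  - exact/ltW/x_gt0.
  - by move=> t /andP[/t0 t0' _]; apply: x_rhs_ge_decay.
  move=> t /andP[/t0 t0' _].
  apply: le_trans (x_rhs_ge_edge _ jk) => [|l]; last exact: x_ge0.
  by rewrite lerD2r ler_wpM2r ?x_ge0 ?Q_diag_ge.
apply: le_trans tr; apply: ler_wpM2r; first exact/ltW/x_gt0.
rewrite /step_const ge_min; apply/orP; left.
rewrite ler_pM2r ?invr_gt0 ?diag_bound_gt0 // -!mulrA ler_wpM2r ?min_rate_le //.
by rewrite mulr_ge0 ?expR_ge0 // subr_ge0 expR_le1 oppr_le0 ltW ?diag_bound_gt0.
Qed.

Lemma x_path_lower a l s j ps : 0 <= s -> path (edge a) j ps -> (size ps <= l)%N ->
  step_const ^+ l * x s a j <= x (s + l%:R) a (last j ps).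
Proof.
elim: l s j ps => [|l IH] s j ps s0 pa.
  by rewrite leqn0 => /nilP ->; rewrite expr0 mul1r addr0.
move=> sz; have [v [ps' [pv sz' lv step]]] : exists v ps', [/\ path (edge a) v ps',
    (size ps' <= l)%N, last j ps = last v ps' & step_const * x s a j <= x (s + 1) a v].
  case: ps pa sz => [|w ps] /=; first by exists j, [::]; split => //; exact: x_decay_step.
  by move=> /andP[/andP[jw Qjw] pw] sz; exists w, ps; split => //; exact: x_edge_step.
rewrite lv (_ : s + l.+1%:R = s + 1 + l%:R); last by rewrite -natr1; ring.
apply: le_trans (IH _ _ _ (addr_ge0 s0 ler01) pv sz').
by rewrite exprS -mulrA mulrCA ler_wpM2l // exprn_ge0 // ltW // step_const_gt0.
Qed.

Lemma x_le_mass t a i : 0 <= t -> x t a i <= \sum_(j < n) x 0 a j.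
Proof.
move=> t0; rewrite -(x_mass_const a t0) (bigD1 i) //= lerDl.
by rewrite sumr_ge0 // => j _; exact: x_ge0.
Qed.

Lemma x_ge_mass_fraction t a i : n%:R <= t ->
  step_const ^+ n * ((\sum_(j < n) x 0 a j) / n%:R) <= x t a i.
Proof.
move=> nt; pose s := t - n%:R; have s0 : 0 <= s by rewrite subr_ge0.
(* some node carries at least the average mass at time t - n, and a simple path
   of at most n edges leads from it to node i *)
have [j xj] := exists_ge_mean (x s a) i; rewrite card_ord x_mass_const // in xj.
have /connectP [ps pa ->] := Q_irr a j i.
case: (shortenP pa) => ps' pa' uq _.
have sz : (size ps' <= n)%N.
  move/card_uniqP: uq => /= card_ps'.
  by have := max_card (mem (j :: ps')); rewrite card_ps' card_ord => /ltnW.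
have := x_path_lower s0 pa' sz; rewrite /s subrK; apply: le_trans.
by apply: ler_wpM2l xj; rewrite exprn_ge0 // ltW // step_const_gt0.
Qed.

Lemma x_eventually_bounded : (0 < n)%N -> exists T c U,
  [/\ 0 <= T, 0 < c & forall t a i, T <= t -> c <= x t a i <= U].
Proof.
move=> n_gt0; pose mass a := \sum_(j < n) x 0 a j.
have mass_gt0 a : 0 < mass a.
  rewrite /mass (bigD1 (Ordinal n_gt0)) //= ltr_pwDl ?x0_gt0 // sumr_ge0 // => j _.
  exact/ltW/x0_gt0.
pose M := \big[Num.min/1]_a mass a.
exists n%:R, (step_const ^+ n * (M / n%:R)), (\big[Num.max/0]_a mass a); split.
- by rewrite ler0n.
- by rewrite mulr_gt0 ?exprn_gt0 ?divr_gt0 ?step_const_gt0 ?ltr0n // lt_bigmin.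
move=> t a i nt; apply/andP; split.
  apply: le_trans (@x_ge_mass_fraction t a i nt).
  rewrite ler_wpM2l ?exprn_ge0 ?(ltW step_const_gt0) // ler_pM2r ?invr_gt0 ?ltr0n //.
  exact: bigmin_le.
apply: le_trans (@x_le_mass t a i (le_trans (ler0n _ _) nt)) _; exact: le_bigmax.
Qed.

Lemma flux_rate_ge0 t a i j : 0 <= t -> j != i -> 0 <= Q a j i * x t a j / x t a i.
Proof. by move=> t0 ji; rewrite divr_ge0 ?mulr_ge0 ?Q_offdiag_ge0 ?x_ge0. Qed.

Lemma p_rhs_ge_at_min s b j K : 0 <= s -> (forall i, beta i <= K) ->
  (forall g l, p s b j <= Num.min (p s g l) (1 - p s g l)) -> -1 < p s b j < 0 ->
  2 * K * p s b j <= p_rhs Q beta delta (x s) (p s) b j.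
Proof.
move=> s0 beta_le p_min /andP[P_gt P_lt0].
have {}p_min g l : p s b j <= p s g l by have := p_min g l; rewrite le_min => /andP[].
rewrite p_rhs_flux.
have flux : 0 <= \sum_(l < n | l != j) Q b l j * x s b l / x s b j * (p s b l - p s b j).
  by apply: sumr_ge0 => l lj; rewrite mulr_ge0 ?flux_rate_ge0 ?subr_ge0.
have pbar_P : p s b j <= pbar (x s) (p s) j.
  by apply: (pbar_ge _ b) => g; [exact: x_gt0|exact: p_min].
have infect : beta j * p s b j * (1 - p s b j) <= beta j * pbar (x s) (p s) j * (1 - p s b j).
  by apply: ler_wpM2r; [lra|apply: ler_wpM2l => //; exact/ltW].
have := beta_gt0 j; have := beta_le j; have := delta_ge0 j.
set P := p s b j in P_gt P_lt0 flux infect *.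
move=> d0 bK b0; have k1 : beta j * (1 - P) <= 2 * K by nra.
nra.
Qed.

Lemma p_rhs_le_at_max s b j K : 0 <= s -> (forall i, beta i <= K) ->
  (forall g l, 1 - p s b j <= Num.min (p s g l) (1 - p s g l)) -> -1 < 1 - p s b j < 0 ->
  2 * K * (1 - p s b j) <= - p_rhs Q beta delta (x s) (p s) b j.
Proof.
move=> s0 beta_le p_min /andP[P_gt P_lt0].
have p_ge g l : 1 - p s b j <= p s g l by have := p_min g l; rewrite le_min => /andP[].
have p_le g l : p s g l <= p s b j by have := p_min g l; rewrite le_min => /andP[_]; lra.
rewrite p_rhs_flux.
have flux : \sum_(l < n | l != j) Q b l j * x s b l / x s b j * (p s b l - p s b j) <= 0.
  rewrite -oppr_ge0 -sumrN; apply: sumr_ge0 => l lj.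
  by rewrite -mulrN mulr_ge0 ?flux_rate_ge0 // oppr_ge0 subr_le0.
have pbar_P : 1 - p s b j <= pbar (x s) (p s) j.
  by apply: (pbar_ge _ b) => g; [exact: x_gt0|exact: p_ge].
have infect : beta j * pbar (x s) (p s) j * (1 - p s b j)
    <= beta j * (1 - p s b j) * (1 - p s b j).
  by apply: ler_wnM2r; [lra|apply: ler_wpM2l => //; exact/ltW].
have := beta_gt0 j; have := beta_le j; have := delta_ge0 j.
set P := p s b j in P_gt P_lt0 flux infect *.
move=> d0 bK b0; have k1 : 0 <= 2 * K + beta j * (1 - P) by nra.
nra.
Qed.

Lemma p_in_01 t a i : 0 <= t -> 0 <= p t a i <= 1.
Proof.
pose K := \big[Num.max/0]_i beta i.
have K0 : 0 <= 2 * K by rewrite mulr_ge0 ?bigmax_ge_id.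
have beta_le i' : beta i' <= K by exact: le_bigmax.
pose y s (k : 'I_m * 'I_n * bool) := if k.2 then p s k.1.1 k.1.2 else 1 - p s k.1.1 k.1.2.
pose y' s (k : 'I_m * 'I_n * bool) := if k.2 then p_rhs Q beta delta (x s) (p s) k.1.1 k.1.2
  else - p_rhs Q beta delta (x s) (p s) k.1.1 k.1.2.
have y_ge0 := @nonneg_invariant R _ y y' (2 * K) 1 K0 ltr01.
have {}y_ge0 : forall s k, 0 <= s -> 0 <= y s k.
  apply: y_ge0 => [[[b j] []]|[[b j] []]|s [[b j] c] s0 y_min] /=.
  - exact: p_is_derive_pos.
  - exact/is_derive_pos_cstB/p_is_derive_pos.
  - by case/andP: (p0_01 b j).
  - by case/andP: (p0_01 b j) => _; rewrite subr_ge0.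
  have y_min' g l : y s (b, j, c) <= Num.min (p s g l) (1 - p s g l).
    by rewrite le_min; apply/andP; split; [exact: (y_min (g, l, true))|exact: (y_min (g, l, false))].
  move: y_min'; clear y_min; case: c => /= y_min' y_lo.
    exact: p_rhs_ge_at_min (ltW s0) beta_le y_min' y_lo.
  exact: p_rhs_le_at_max (ltW s0) beta_le y_min' y_lo.
move=> t0; have := y_ge0 t (a, i, true) t0; have := y_ge0 t (a, i, false) t0.
by rewrite /y /= => h1 h2; apply/andP; split; lra.
Qed.

Section Eventually.
Variables (T c U : R).
Hypothesis T_ge0 : 0 <= T.
Hypothesis c_gt0 : 0 < c.
Hypothesis x_bounds : forall t a i, T <= t -> c <= x t a i <= U.

Lemma U_gt0 (a : 'I_m) (i : 'I_n) : 0 < U.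
Proof. by have /andP[ci Ui] := x_bounds a i (lexx T); exact: lt_le_trans c_gt0 (le_trans ci Ui). Qed.

Lemma x_ratio_le t a b i j : T <= t -> x t a j / x t b i <= U / c.
Proof.
move=> Tt; have /andP[cj Uj] := x_bounds a j Tt; have /andP[ci Ui] := x_bounds b i Tt.
have xi0 : 0 < x t b i := lt_le_trans c_gt0 ci.
rewrite ler_pM ?invr_ge0 ?lef_pV2 ?posrE ?(ltW xi0) //.
exact: le_trans (ltW c_gt0) cj.
Qed.

Lemma x_ratio_ge t a b i j : T <= t -> c / U <= x t a j / x t b i.
Proof.
move=> Tt; have /andP[cj Uj] := x_bounds a j Tt; have /andP[ci Ui] := x_bounds b i Tt.
have xi0 : 0 < x t b i := lt_le_trans c_gt0 ci.
have U0 := U_gt0 a i.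
by rewrite ler_pM ?invr_ge0 ?lef_pV2 ?posrE ?(ltW c_gt0) ?(ltW U0).
Qed.

Lemma frac_ge t g i : T <= t -> c / (m%:R * U) <= Defs.frac (x t) g i.
Proof.
move=> Tt; have /andP[cg Ug] := x_bounds g i Tt.
have S_le : \sum_(h < m) x t h i <= m%:R * U.
  have -> : m%:R * U = \sum_(h < m) U by rewrite sumr_const card_ord mulr_natl.
  by apply: ler_sum => h _; case/andP: (x_bounds h i Tt).
have S_gt0 : 0 < \sum_(h < m) x t h i.
  rewrite (bigD1 g) //= ltr_pwDl ?(lt_le_trans c_gt0) // sumr_ge0 // => h _.
  by rewrite x_ge0 // (le_trans T_ge0).
have mU0 : 0 < m%:R * U := lt_le_trans S_gt0 S_le.
by rewrite /Defs.frac ler_pM ?invr_ge0 ?lef_pV2 ?posrE ?(ltW c_gt0) ?(ltW mU0).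
Qed.

Definition decay_rate a i := delta i + (\sum_(j < n | j != i) Q a j i) * (U / c) + 1.

Lemma decay_rate_gt0 a i : 0 < decay_rate a i.
Proof.
have Uc : 0 <= U / c by rewrite divr_ge0 // ltW // (U_gt0 a i).
rewrite /decay_rate ltr_pwDr // addr_ge0 // mulr_ge0 // sumr_ge0 // => j ji.
exact: Q_offdiag_ge0.
Qed.

Lemma p_rhs_ge_gain a i t : T < t ->
  - decay_rate a i * p t a i
  + (beta i * pbar (x t) (p t) i * (1 - p t a i)
     + \sum_(j < n | j != i) Q a j i * x t a j / x t a i * p t a j)
  <= p_rhs Q beta delta (x t) (p t) a i.
Proof.
move=> Tt; have t0 : 0 <= t := le_trans T_ge0 (ltW Tt).
rewrite p_rhs_flux.
under [X in _ <= _ + X]eq_bigr do rewrite mulrBr.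
rewrite sumrB -[\sum_(j < n | j != i) _ * p t a i]mulr_suml.
have /andP[p0 p1] := p_in_01 a i t0.
have rate_le : \sum_(j < n | j != i) Q a j i * x t a j / x t a i
    <= (\sum_(j < n | j != i) Q a j i) * (U / c).
  rewrite mulr_suml; apply: ler_sum => j ji; rewrite -mulrA ler_wpM2l ?Q_offdiag_ge0 //.
  exact: x_ratio_le (ltW Tt).
have := ler_wpM2r p0 rate_le; have : 0 <= delta i * p t a i by rewrite mulr_ge0.
rewrite /decay_rate; lra.
Qed.

Lemma infection_ge0 a i t : 0 <= t -> 0 <= beta i * pbar (x t) (p t) i * (1 - p t a i).
Proof.
move=> t0; have /andP[_ p1] := p_in_01 a i t0.
rewrite mulr_ge0 ?subr_ge0 // mulr_ge0 ?(ltW (beta_gt0 i)) //.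
by apply: (pbar_ge _ a) => g; [exact: x_gt0|case/andP: (p_in_01 g i t0)].
Qed.

Lemma inflow_ge0 a i t : 0 <= t ->
  0 <= \sum_(j < n | j != i) Q a j i * x t a j / x t a i * p t a j.
Proof.
move=> t0; apply: sumr_ge0 => j ji.
by rewrite mulr_ge0 ?flux_rate_ge0 //; case/andP: (p_in_01 a j t0).
Qed.

Lemma p_rhs_ge_decay a i t : T < t ->
  - decay_rate a i * p t a i <= p_rhs Q beta delta (x t) (p t) a i.
Proof.
move=> Tt; have t0 : 0 <= t := le_trans T_ge0 (ltW Tt).
apply: le_trans (p_rhs_ge_gain a i Tt); rewrite lerDl.
by rewrite addr_ge0 ?infection_ge0 ?inflow_ge0.
Qed.

Lemma p_rhs_ge_edge a i j t : T < t -> j != i ->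
  - decay_rate a i * p t a i + Q a j i * (c / U) * p t a j
  <= p_rhs Q beta delta (x t) (p t) a i.
Proof.
move=> Tt ji; have t0 : 0 <= t := le_trans T_ge0 (ltW Tt).
apply: le_trans (p_rhs_ge_gain a i Tt); rewrite lerD2l.
apply: ler_wpDl; first exact: infection_ge0.
rewrite (bigD1 j) //=; apply: ler_wpDr.
  apply: sumr_ge0 => l /andP[li _].
  by rewrite mulr_ge0 ?flux_rate_ge0 //; case/andP: (p_in_01 a l t0).
have /andP[pj0 _] := p_in_01 a j t0.
rewrite ler_wpM2r // -mulrA ler_wpM2l ?Q_offdiag_ge0 //.
exact: x_ratio_ge (ltW Tt).
Qed.

Lemma p_rhs_ge_class a g i t : T < t -> p t a i <= 1 / 2 ->
  - decay_rate a i * p t a i + beta i * (c / (m%:R * U)) / 2 * p t g i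
  <= p_rhs Q beta delta (x t) (p t) a i.
Proof.
move=> Tt p_half; have t0 : 0 <= t := le_trans T_ge0 (ltW Tt).
apply: le_trans (p_rhs_ge_gain a i Tt); rewrite lerD2l.
apply: ler_wpDr; first exact: inflow_ge0.
have /andP[pg0 _] := p_in_01 g i t0.
have pbar_ge0 : 0 <= pbar (x t) (p t) i.
  by apply: (pbar_ge _ a) => h; [exact: x_gt0|case/andP: (p_in_01 h i t0)].
have pbar_g : c / (m%:R * U) * p t g i <= pbar (x t) (p t) i.
  apply: le_trans (ler_wpM2r pg0 (frac_ge g i (ltW Tt))) _.
  rewrite /pbar (bigD1 g) //= lerDl sumr_ge0 // => h _.
  have /andP[ph0 _] := p_in_01 h i t0.
  by rewrite mulr_ge0 // frac_ge0 // => h'; exact: x_gt0.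
have := ler_wpM2l (ltW (beta_gt0 i)) pbar_g.
have : 0 <= beta i * pbar (x t) (p t) i by rewrite mulr_ge0 ?(ltW (beta_gt0 i)).
nra.
Qed.

Lemma cvg0_edge a i j : j != i -> 0 < Q a j i ->
  p t a i @[t --> +oo] --> 0 -> p t a j @[t --> +oo] --> 0.
Proof.
move=> ji Qji; have C0 : 0 < Q a j i * (c / U).
  by rewrite !mulr_gt0 // invr_gt0 (U_gt0 a i).
apply: (cvg0_driven (p_is_derive_pos a i) (p_is_derive_pos a j) T_ge0
  (decay_rate_gt0 a i) (decay_rate_gt0 a j) C0).
- by move=> t Tt; case/andP: (p_in_01 a i (le_trans T_ge0 Tt)).
- by move=> t Tt; case/andP: (p_in_01 a j (le_trans T_ge0 Tt)).
- by move=> t; exact: p_rhs_ge_decay.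
- by move=> t Tt; exact: p_rhs_ge_edge.
Qed.

Lemma cvg0_class a g i : p t a i @[t --> +oo] --> 0 -> p t g i @[t --> +oo] --> 0.
Proof.
move=> pai0; have [T' T'_ge p_half] : exists2 T', T <= T' & forall t, T' < t -> p t a i <= 1 / 2.
  have /cvgrPdist_lt/(_ (1 / 2) ltac:(lra)) [M [_ HM]] := pai0.
  exists (Num.max T M) => [|t]; first by rewrite le_max lexx.
  rewrite gt_max => /andP[_ /HM]; rewrite sub0r normrN => /ltW; apply: le_trans.
  exact: ler_norm.
have m0 : 0 < m%:R :> R by rewrite ltr0n (leq_ltn_trans _ (ltn_ord a)).
have C0 : 0 < beta i * (c / (m%:R * U)) / 2.
  by rewrite !mulr_gt0 ?invr_gt0 ?mulr_gt0 // (U_gt0 a i).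
apply: (cvg0_driven (p_is_derive_pos a i) (p_is_derive_pos g i) (le_trans T_ge0 T'_ge)
  (decay_rate_gt0 a i) (decay_rate_gt0 g i) C0) => //.
- by move=> t Tt; case/andP: (p_in_01 a i (le_trans T_ge0 (le_trans T'_ge Tt))).
- by move=> t Tt; case/andP: (p_in_01 g i (le_trans T_ge0 (le_trans T'_ge Tt))).
- by move=> t Tt; apply: p_rhs_ge_decay; exact: le_lt_trans Tt.
- by move=> t Tt; apply: p_rhs_ge_class; [exact: le_lt_trans Tt|exact: p_half].
Qed.

End Eventually.

Lemma p_cvg0_of_one : (exists a i, p t a i @[t --> +oo] --> 0) ->
  forall a i, p t a i @[t --> +oo] --> 0.
Proof.
move=> [a0 [i0 p0_cvg]] a i.
have [T [c [U [T_ge0 c_gt0 x_bds]]]] := x_eventually_bounded (leq_ltn_trans (leq0n _) (ltn_ord i0)).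
have := cvg0_class T_ge0 c_gt0 x_bds a p0_cvg.
have /connectP [ps pa ->] := Q_irr a i i0.
elim: ps i pa => [|v ps IH] j //= /andP[/andP[jv Qjv] pa] /(IH _ pa).
exact: cvg0_edge T_ge0 c_gt0 x_bds _ _ _ jv Qjv.
Qed.
End Model.

Theorem lemma1 (R : realType) (m n : nat) (Q : 'I_m -> 'M[R]_n)
  (beta delta : 'I_n -> R) (x p : R -> 'I_m -> 'I_n -> R) :
  (forall a, generator (Q a)) ->
  (forall a, irreducible_gen (Q a)) ->
  (forall i, 0 < beta i) ->
  (forall i, 0 <= delta i) ->
  is_solution Q beta delta x p ->
  (forall a i, 0 < x 0 a i) ->
  (forall a i, 0 <= p 0 a i <= 1) ->
  (exists (a : 'I_m) (i : 'I_n), p t a i @[t --> +oo] --> 0) ->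
  forall (a : 'I_m) (i : 'I_n), p t a i @[t --> +oo] --> 0.
Proof. exact: p_cvg0_of_one. Qed.
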